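(* Let $G$ be a bipartite graph and let $M$ be a maximum matching in $G$ such that $\mathrm{diss}(G)=\frac{4}{3}\alpha(G-M)$. Then $\alpha(G-M)=\alpha(G)$, the graphs $G$ and $G-M$ have the same matching number, and for every maximum dissociation set $I$ of $G$, the induced subgraph $G[I]$ is $1$-regular and exactly half of the edges of $G[I]$ belong to $M$ (so $|E(G[I])\cap M|=\frac{\mathrm{diss}(G)}{4}$).
   Context: All graphs are finite, simple and undirected. A set $I$ of vertices of a graph $G$ is a dissociation set if the induced subgraph $G[I]$ has maximum degree at most $1$; $\mathrm{diss}(G)$ is the maximum order of a dissociation set in $G$. $\alpha(H)$ denotes the independence number of $H$. For a set $M$ of edges, $G-M$ is the graph on $V(G)$ with edge set $E(G)\setminus M$. *)

(* A finite simple graph on a finType T is a symmetric,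
   irreflexive boolean relation e : rel T. Edges are 2-element sets. *)
From mathcomp Require Import all_boot all_order.
Set Implicit Arguments. Unset Strict Implicit. Unset Printing Implicit Defensive.

Section Graphs.
Variable T : finType.

Definition simple_graph (e : rel T) : Prop := symmetric e /\ irreflexive e.

Definition bipartite (e : rel T) : Prop :=
  exists c : T -> bool, forall x y, e x y -> c x != c y.

Definition is_edge (e : rel T) (f : {set T}) : bool :=
  [exists x, exists y, e x y && (f == [set x; y])].

Definition matching (e : rel T) (M : {set {set T}}) : bool :=
  [forall f in M, is_edge e f] &&
  [forall f in M, forall g in M, (f != g) ==> [disjoint f & g]].

Definition matching_number (e : rel T) : nat :=
  \max_(M : {set {set T}} | matching e M) #|M|.

Definition maximum_matching (e : rel T) (M : {set {set T}}) : bool :=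
  matching e M && (#|M| == matching_number e).

Definition remove_edges (e : rel T) (M : {set {set T}}) : rel T :=
  fun x y => e x y && ([set x; y] \notin M).

Definition independent (e : rel T) (A : {set T}) : bool :=
  [forall x in A, forall y in A, ~~ e x y].

Definition alpha (e : rel T) : nat :=
  \max_(A : {set T} | independent e A) #|A|.

Definition ideg (e : rel T) (I : {set T}) (x : T) : nat :=
  #|[set y in I | e x y]|.

Definition dissociation (e : rel T) (I : {set T}) : bool :=
  [forall x in I, ideg e I x <= 1].

Definition diss (e : rel T) : nat :=
  \max_(I : {set T} | dissociation e I) #|I|.

Definition maximum_dissociation (e : rel T) (I : {set T}) : bool :=
  dissociation e I && (#|I| == diss e).

Definition induced_edges (e : rel T) (I : {set T}) : {set {set T}} :=
  [set f : {set T} | is_edge e f & f \subset I].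

End Graphs.

From mathcomp Require Import all_boot all_order.
From mathcomp Require Import zify.

(* Let I be a maximum dissociation set of G, so that G[I] is a matching with
   edge set E_I, and let n = |V(G)|. Then
     2 |E_I| <= |I|, with equality only if G[I] is 1-regular;
     |I| - |E_I \ M| <= alpha(G - M), by deleting one end of each edge of E_I \ M;
     |M| - |E_I ∩ M| <= n - |I|, since each edge of M outside E_I has its own
       end outside I.
   Konig's theorem n <= alpha + nu, for G and for the bipartite graph G - M,
   together with alpha(G) <= alpha(G - M), nu(G - M) <= nu(G) and the hypothesis
   3 diss(G) = 4 alpha(G - M), forces equality in all of these inequalities.
   Konig's theorem is derived from Hall's deficiency formula. *)

Set Implicit Arguments. Unset Strict Implicit. Unset Printing Implicit Defensive.

Section DefectHall.
Variable T : finType.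
Implicit Types (r : rel T) (A B S X Y : {set T}).

Lemma cardsU_disjoint A B : [disjoint A & B] -> #|A :|: B| = #|A| + #|B|.
Proof. by move=> dAB; rewrite -cardsUI (disjoint_setI0 dAB) cards0 addn0. Qed.

Definition nbhd r S := [set y | [exists x in S, r x y]].

Lemma nbhdP r S y : reflect (exists2 x, x \in S & r x y) (y \in nbhd r S).
Proof.
rewrite inE; apply: (iffP existsP) => [[x /andP[]]|[x xS rxy]]; first by exists x.
by exists x; rewrite xS.
Qed.

Lemma nbhd0 r : nbhd r set0 = set0.
Proof. by apply/setP => y; rewrite [RHS]inE; apply/negbTE/nbhdP => -[x]; rewrite inE. Qed.

Definition avoid r Y : rel T := fun x y => r x y && (y \notin Y).

(* |S| - |N(S)|, shifted by #|T| to avoid truncated subtraction. *)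
Definition deficiency r S := #|S| + (#|T| - #|nbhd r S|).

(* [g] matches [X'] into the neighbourhood of [X], and [S] certifies that this
   matching is maximum: it misses at most |S| - |N(S)| vertices of [X]. *)
Definition hall_cert r X S X' (g : T -> T) :=
  [/\ S \subset X, X' \subset X, {in X' &, injective g},
      {in X', forall x, r x (g x)} & #|X| + #|nbhd r S| <= #|X'| + #|S|].

Lemma hall_cert0 r : hall_cert r set0 set0 set0 id.
Proof. by split; rewrite ?sub0set ?nbhd0 ?cards0 // => x; rewrite inE. Qed.

Lemma hall_cert_split r X S0 A S0' g1 B X2' g2 :
    S0 \subset X -> deficiency r A <= deficiency r S0 ->
    hall_cert r S0 A S0' g1 -> hall_cert (avoid r (nbhd r S0)) (X :\: S0) B X2' g2 ->
  hall_cert r X (S0 :|: B) (S0' :|: X2') (fun z => if z \in S0 then g1 z else g2 z).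
Proof.
move=> S0X defA [AS0 S0'S0 g1i g1r h1] [BX2 X2'X2 g2i g2r h2].
have X2'S0 z : z \in X2' -> z \in S0 = false.
  by move=> /(subsetP X2'X2); rewrite inE => /andP[/negbTE].
have g1N z : z \in S0' -> g1 z \in nbhd r S0.
  by move=> zS; apply/nbhdP; exists z; [apply: (subsetP S0'S0) | apply: g1r].
have g2N z : z \in X2' -> g2 z \notin nbhd r S0 by move=> /g2r /andP[].
split.
- by rewrite subUset S0X (subset_trans BX2) ?subsetDl.
- by rewrite subUset (subset_trans S0'S0 S0X) (subset_trans X2'X2) ?subsetDl.
- move=> z1 z2; rewrite !inE => /orP[z1S|z1S] /orP[z2S|z2S];
    rewrite ?(subsetP S0'S0 _ z1S) ?(subsetP S0'S0 _ z2S) ?X2'S0 //.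
  + exact: g1i.
  + by move=> E; move: (g2N _ z2S); rewrite -E g1N.
  + by move=> E; move: (g2N _ z1S); rewrite E g1N.
  + exact: g2i.
- move=> z; rewrite inE => /orP[zS|zS]; first by rewrite (subsetP S0'S0 _ zS) g1r.
  by rewrite X2'S0 //; have /andP[] := g2r _ zS.
have nbU : #|nbhd r (S0 :|: B)| <= #|nbhd r S0| + #|nbhd (avoid r (nbhd r S0)) B|.
  apply: leq_trans (leq_card_setU _ _); apply: subset_leq_card.
  apply/subsetP => y /nbhdP[x]; rewrite !in_setU => /orP[xS|xB] rxy.
    by apply/orP; left; apply/nbhdP; exists x.
  by case yS: (y \in nbhd r S0); last by apply/nbhdP; exists x; rewrite // /avoid rxy yS.
rewrite !cardsU_disjoint; last 2 first.
- rewrite disjoint_subset; apply/subsetP => z zS0; rewrite inE.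
  by apply: contraTN zS0 => /(subsetP BX2); rewrite inE => /andP[].
- rewrite disjoint_subset; apply/subsetP => z zS0'; rewrite inE.
  by apply: contraTN zS0' => /X2'S0 zS0; apply/negP => /(subsetP S0'S0); rewrite zS0.
move: h1 h2 defA nbU; rewrite cardsDS // /deficiency.
have := max_card (nbhd r A); have := max_card (nbhd r S0); have := subset_leq_card S0X.
lia.
Qed.

Lemma hall_cert_drop r X x0 A X1' g :
    x0 \in X -> deficiency r A < deficiency r X ->
  hall_cert r (X :\ x0) A X1' g -> hall_cert r X X X1' g.
Proof.
move=> x0X defA [AX1 X1'X1 gi gr h]; split => //.
  exact: subset_trans X1'X1 (subsetDl _ _).
move: h defA; rewrite /deficiency [#|X|](cardsD1 x0) x0X.
have := max_card (nbhd r A); have := max_card (nbhd r X).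
lia.
Qed.

Lemma hall_cert_extend r X x0 y0 A X1' g :
    x0 \in X -> r x0 y0 -> (A != set0 -> #|A| < #|nbhd r A|) ->
    hall_cert (avoid r [set y0]) (X :\ x0) A X1' g ->
  hall_cert r X set0 (x0 |: X1') (fun z => if z == x0 then y0 else g z).
Proof.
move=> x0X rxy0 hallA [AX1 X1'X1 gi gr h].
have x0X1' : x0 \notin X1' by apply/negP => /(subsetP X1'X1); rewrite !inE eqxx.
have gy0 z : z \in X1' -> g z != y0.
  by move=> /gr /andP[_]; rewrite inE.
have neqx0 z : z \in X1' -> (z == x0) = false.
  by move=> zX; apply/negbTE; apply: contraNneq x0X1' => <-.
have nbA : #|A| <= #|nbhd (avoid r [set y0]) A|.
  have sub : nbhd r A \subset y0 |: nbhd (avoid r [set y0]) A.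
    apply/subsetP => y /nbhdP[z zA rzy]; rewrite in_setU1.
    by case: eqVneq => //= yn; apply/nbhdP; exists z; rewrite // /avoid rzy inE yn.
  have := subset_leq_card sub; rewrite cardsU1.
  have [->|/hallA] := eqVneq A set0; first by rewrite cards0.
  case: (y0 \notin _) => /=; lia.
split.
- exact: sub0set.
- by rewrite subUset sub1set x0X (subset_trans X1'X1) ?subsetDl.
- move=> z1 z2; rewrite !inE => /orP[/eqP->|z1S] /orP[/eqP->|z2S]; rewrite ?eqxx ?neqx0 //.
  + by move=> E; move: (gy0 _ z2S); rewrite E eqxx.
  + by move=> E; move: (gy0 _ z1S); rewrite E eqxx.
  + exact: gi.
- move=> z; rewrite !inE => /orP[/eqP->|zS]; first by rewrite eqxx.
  by rewrite neqx0 //; have /andP[] := gr _ zS.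
move: h nbA; rewrite nbhd0 cards0 cardsU1 x0X1' [#|X|](cardsD1 x0) x0X.
lia.
Qed.

Lemma hall_cert_strict r X x0 :
    x0 \in X -> (forall S, S \subset X -> #|S| <= #|nbhd r S|) ->
    (forall S, S != set0 -> S \proper X -> #|S| < #|nbhd r S|) ->
    (forall r' Y, Y \proper X -> exists S Y' g, hall_cert r' Y S Y' g) ->
  exists S X' g, hall_cert r X S X' g.
Proof.
move=> x0X hall strict IH.
have [y0 rx0y0] : exists y0, r x0 y0.
  have : 0 < #|nbhd r [set x0]| by rewrite -(cards1 x0) hall // sub1set.
  by rewrite card_gt0 => /set0Pn[y0 /nbhdP[x]]; rewrite inE => /eqP->; exists y0.
have [A [X1' [g cert]]] := IH (avoid r [set y0]) _ (properD1 x0X).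
have [AX1 _ _ _ _] := cert.
exists set0, (x0 |: X1'), (fun z => if z == x0 then y0 else g z).
apply: (hall_cert_extend x0X rx0y0 _ cert) => An.
exact: strict An (sub_proper_trans AX1 (properD1 x0X)).
Qed.

Lemma hall_deficiency r X : exists S X' g, hall_cert r X S X' g.
Proof.
(* Induction on |X|. If a nonempty proper subset maximises the deficiency,
   split along it; if only X does, drop a vertex; otherwise Hall's condition
   holds strictly. *)
have [n] := ubnP #|X|; elim: n r X => // n IH r X /ltnSE leXn.
have [->|/set0Pn[x0 x0X]] := eqVneq X set0.
  by exists set0, set0, id; exact: hall_cert0.
have IHproper r' Y : Y \proper X -> exists S X' g, hall_cert r' Y S X' g.
  by move=> /proper_card ltYX; apply: IH; lia.
have [Sm SmX maxSm] := @arg_maxnP _ set0 (fun S => S \subset X) (deficiency r) (sub0set X).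
have def0 : deficiency r set0 = #|T| by rewrite /deficiency nbhd0 !cards0 subn0.
have [/existsP[S0 /and3P[S0n S0pX maxS0]] | noS0] :=
  boolP [exists S0 : {set T}, [&& S0 != set0, S0 \proper X & deficiency r Sm <= deficiency r S0]].
  have S0X : S0 \subset X by case/andP: S0pX.
  have [A [S0' [g1 cert1]]] := IHproper r S0 S0pX.
  have [AS0 _ _ _ _] := cert1.
  have S0cpX : X :\: S0 \proper X.
    rewrite setDE properIl // -disjoints_subset; case/set0Pn: S0n => z zS0.
    by apply/negP => /disjointFr/(_ (subsetP S0X _ zS0)); rewrite zS0.
  have [B [X2' [g2 cert2]]] := IHproper (avoid r (nbhd r S0)) _ S0cpX.
  exists (S0 :|: B), (S0' :|: X2'), (fun z => if z \in S0 then g1 z else g2 z).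
  apply: hall_cert_split cert1 cert2 => //.
  exact: leq_trans (maxSm _ (subset_trans AS0 S0X)) maxS0.
have ltSm S : S != set0 -> S \proper X -> deficiency r S < deficiency r Sm.
  move=> Sn SX; rewrite ltnNge; apply: contraNN noS0 => le.
  by apply/existsP; exists S; rewrite Sn SX.
have [gtT|leT] := ltnP #|T| (deficiency r Sm).
  have SmE : Sm = X.
    apply/eqP; apply: contraTT gtT => SmnX; rewrite -leqNgt.
    have [-> //|Smn] := eqVneq Sm set0; first by rewrite def0.
    by have := ltSm _ Smn; rewrite properEneq SmnX SmX ltnn => /(_ isT).
  have [A [X1' [g1 cert1]]] := IHproper r _ (properD1 x0X).
  have [AX1 _ _ _ _] := cert1.
  exists X, X1', g1; apply: (hall_cert_drop x0X _ cert1); rewrite -SmE.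
  have [->|An] := eqVneq A set0; first by rewrite def0.
  exact: ltSm An (sub_proper_trans AX1 (properD1 x0X)).
apply: hall_cert_strict x0X _ _ IHproper => S.
  move=> /maxSm leS; have := leq_trans leS leT; have := max_card (nbhd r S).
  by rewrite /deficiency; lia.
move=> Sn /(ltSm _ Sn) ltS; have := leq_trans ltS leT; have := max_card (nbhd r S).
by rewrite /deficiency; lia.
Qed.

End DefectHall.

Section Konig.
Variable T : finType.
Implicit Types (e : rel T) (A X : {set T}) (N : {set {set T}}).

Lemma leq_alpha e A : independent e A -> #|A| <= alpha e.
Proof. exact: leq_bigmax_cond. Qed.

Lemma leq_matching_number e N : matching e N -> #|N| <= matching_number e.
Proof. exact: leq_bigmax_cond. Qed.

Lemma alpha_subrel e e' : subrel e' e -> alpha e <= alpha e'.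
Proof.
move=> ee'; apply/bigmax_leqP => A /forallP indA; apply: leq_alpha.
apply/forallP => x; apply/implyP => xA; apply/forallP => y; apply/implyP => yA.
by apply: contraNN (implyP (forallP (implyP (indA x) xA) y) yA); apply: ee'.
Qed.

Lemma matching_number_subrel e e' : subrel e' e -> matching_number e' <= matching_number e.
Proof.
move=> ee'; apply/bigmax_leqP => N /andP[/forallP edgesN disjN]; apply: leq_matching_number.
rewrite /matching disjN andbT; apply/forallP => f; apply/implyP => /(implyP (edgesN f)).
by case/existsP=> x /existsP[y /andP[/ee' exy Ef]]; apply/existsP; exists x; apply/existsP; exists y; rewrite exy.
Qed.

Lemma card_le_matching_number e X (g : T -> T) :
    {in X &, injective g} -> {in X, forall x, e x (g x)} -> {in X, forall x, g x \notin X} ->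
  #|X| <= matching_number e.
Proof.
move=> gi gr gX; pose N := [set [set x; g x] | x in X].
have in_pair_eq x x' : x \in X -> x' \in X -> x \in [set x'; g x'] -> x = x'.
  by move=> xX x'X; rewrite !inE => /orP[/eqP //|/eqP Ex]; move: (gX _ x'X); rewrite -Ex xX.
have cardN : #|N| = #|X|.
  by apply: card_in_imset => x x' xX x'X Ex; apply: in_pair_eq; rewrite // -Ex !inE eqxx.
rewrite -cardN; apply: leq_matching_number; apply/andP; split.
  apply/forallP => f; apply/implyP => /imsetP[x xX ->].
  by apply/existsP; exists x; apply/existsP; exists (g x); rewrite gr // eqxx.
apply/forallP => f; apply/implyP => /imsetP[x xX ->].
apply/forallP => f'; apply/implyP => /imsetP[x' x'X ->]; apply/implyP.
apply: contraR; rewrite -setI_eq0 => /set0Pn[z]; rewrite inE => /andP[zx zx'].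
suff -> : x = x' by rewrite eqxx.
move: zx zx'; rewrite !inE => /orP[]/eqP-> /orP[]/eqP Ez.
- by [].
- by move: (gX _ x'X); rewrite -Ez xX.
- by move: (gX _ xX); rewrite Ez x'X.
- exact: gi.
Qed.

Lemma card_le_alpha_add_matching_number e :
  symmetric e -> bipartite e -> #|T| <= alpha e + matching_number e.
Proof.
move=> se [c hc]; pose X := [set x | c x].
have [S [X' [g [SX X'X gi gr hall]]]] := hall_deficiency e X.
have inX x : (x \in X) = c x by rewrite inE.
have edge_colours x y : e x y -> c y = ~~ c x by move/hc; case: (c x); case: (c y).
pose J := S :|: (~: X :\: nbhd e S).
have indJ : independent e J.
  apply/forallP => x; apply/implyP => xJ; apply/forallP => y; apply/implyP => yJ.
  apply/negP => exy; move: xJ yJ; rewrite !in_setU !in_setD !in_setC !inX.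
  case/orP => [xS|/andP[xN cx]]; case/orP => [yS|/andP[yN cy]].
  - by move: (subsetP SX _ yS) (subsetP SX _ xS); rewrite !inX (edge_colours _ _ exy) => /negbTE->.
  - by move: yN; rewrite (_ : y \in nbhd e S) //; apply/nbhdP; exists x.
  - by move: xN; rewrite (_ : x \in nbhd e S) //; apply/nbhdP; exists y; rewrite // se.
  - by move: cy; rewrite (edge_colours _ _ exy) cx.
have cardJ : #|S| + #|~: X| <= #|J| + #|nbhd e S|.
  have dj : [disjoint S & ~: X :\: nbhd e S].
    by rewrite disjoints_subset; apply/subsetP => z /(subsetP SX) zX; rewrite !(in_setC, in_setD) zX andbF.
  rewrite /J cardsU_disjoint // cardsD; have := subset_leq_card (subsetIr (~: X) (nbhd e S)); lia.
have gX' : {in X', forall x, g x \notin X'}.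
  move=> x xX'; apply: contraTN isT => gxX'.
  move: (edge_colours _ _ (gr _ xX')) (subsetP X'X _ xX') (subsetP X'X _ gxX').
  by rewrite !inX => ->; case: (c x).
have := leq_alpha indJ; have := card_le_matching_number gi gr gX'.
have := cardsC X; have := subset_leq_card SX.
lia.
Qed.

End Konig.

Section Dissociation.
Variables (T : finType) (e : rel T).
Hypothesis se : symmetric e.
Variable c : T -> bool.
Hypothesis hc : forall x y, e x y -> c x != c y.
Variable I : {set T}.
Hypothesis dI : dissociation e I.

Local Notation EI := (induced_edges e I).

Definition closed_nbhd x := x |: [set y in I | e x y].

Lemma dissociation_edge z w : z \in I -> w \in I -> e z w ->
  ideg e I z = 1 /\ closed_nbhd z = [set z; w].
Proof.
move=> zI wI ezw.
have wN : w \in [set y in I | e z y] by rewrite inE wI ezw.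
have : ideg e I z <= 1 by move/forallP: dI => /(_ z) /implyP /(_ zI).
rewrite leq_eqVlt ltnS leqn0 cards_eq0 => /orP[/cards1P[u Eu] | /eqP E0]; last first.
  by move: wN; rewrite E0 inE.
by move: wN; rewrite /ideg /closed_nbhd Eu cards1 inE => /eqP->.
Qed.

Lemma induced_edgeP f :
  reflect (exists x y, [/\ x \in I, y \in I, e x y & f = [set x; y]]) (f \in EI).
Proof.
rewrite inE; apply: (iffP andP) => [[/existsP[x /existsP[y /andP[exy /eqP Ef]]] fI] | ].
  by exists x, y; split => //; apply: (subsetP fI); rewrite Ef !inE eqxx ?orbT.
case=> x [y [xI yI exy ->]]; split; last by rewrite subUset !sub1set xI yI.
by apply/existsP; exists x; apply/existsP; exists y; rewrite exy eqxx.
Qed.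

(* Each edge of G[I] has exactly one endpoint of colour [b], and the closed
   neighbourhood in G[I] of that endpoint is the edge itself. *)
Definition ends (b : bool) (F : {set {set T}}) :=
  [set x in I | [&& c x == b, ideg e I x == 1 & closed_nbhd x \in F]].

Lemma card_ends (b : bool) (F : {set {set T}}) : F \subset EI -> #|ends b F| = #|F|.
Proof.
move=> FE.
have inj : {in ends b F &, injective closed_nbhd}.
  move=> x x'; rewrite !inE => /and4P[_ /eqP cx _ _] /and4P[_ /eqP cx' _ _] E.
  have : x' \in closed_nbhd x by rewrite E !inE eqxx.
  rewrite !inE => /orP[/eqP // | /andP[_ exx']].
  by have := hc exx'; rewrite cx cx' eqxx.
rewrite -(card_in_imset inj); suff -> : closed_nbhd @: ends b F = F by [].
apply/setP => f; apply/imsetP/idP.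
  by case=> x; rewrite inE => /and4P[_ _ _ fF] ->.
move=> fF; have /induced_edgeP[x [y [xI yI exy Ef]]] := subsetP FE _ fF.
have [cxb | cxb] := eqVneq (c x) b.
  have [x1 Nx] := dissociation_edge xI yI exy.
  by exists x; [rewrite inE xI cxb eqxx x1 Nx -Ef fF | rewrite Nx].
have cyb : c y == b by move: (hc exy) cxb; case: (c x); case: (c y); case: (b).
have [y1 Ny] := dissociation_edge yI xI (etrans (se y x) exy).
by exists y; [rewrite inE yI cyb y1 Ny setUC -Ef fF | rewrite Ny setUC].
Qed.

Lemma card_ends_induced : #|ends true EI :|: ends false EI| = 2 * #|EI|.
Proof.
rewrite cardsU_disjoint ?card_ends // ?mul2n ?addnn //.
by rewrite -setI_eq0; apply/eqP/setP => z; rewrite !inE; case: (c z); rewrite ?andbF.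
Qed.

Lemma ends_sub b F : ends b F \subset I.
Proof. by apply/subsetP => x; rewrite inE => /andP[]. Qed.

Lemma card_induced_edges_le : 2 * #|EI| <= #|I|.
Proof. by rewrite -card_ends_induced subset_leq_card // subUset !ends_sub. Qed.

Lemma induced_regular : 2 * #|EI| = #|I| -> forall x, x \in I -> ideg e I x = 1.
Proof.
rewrite -card_ends_induced => E x xI.
have /eqP EU : ends true EI :|: ends false EI == I by rewrite eqEcard subUset !ends_sub E leqnn.
have : x \in ends true EI :|: ends false EI by rewrite EU.
by rewrite !inE => /orP[] /and4P[_ _ /eqP].
Qed.

Lemma card_le_alpha_remove_edges (M : {set {set T}}) :
  #|I| + #|EI :&: M| <= alpha (remove_edges e M) + #|EI|.
Proof.
pose R := ends true (EI :\: M).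
have cardR : #|R| = #|EI :\: M| by apply: card_ends; exact: subsetDl.
have indJ : independent (remove_edges e M) (I :\: R).
  apply/forallP => x; apply/implyP; rewrite inE => /andP[xR xI].
  apply/forallP => y; apply/implyP; rewrite inE => /andP[yR yI].
  apply/negP => /andP[exy xyM].
  have xyE : [set x; y] \in EI by apply/induced_edgeP; exists x, y.
  have [cx|cx] := boolP (c x).
    have [x1 Nx] := dissociation_edge xI yI exy.
    by move: xR; rewrite inE xI cx x1 Nx in_setD xyE xyM.
  have cy : c y by move: (hc exy) cx; case: (c x); case: (c y).
  have [y1 Ny] := dissociation_edge yI xI (etrans (se y x) exy).
  by move: yR; rewrite inE yI cy y1 Ny setUC in_setD xyE xyM.
have RI : #|EI :\: M| <= #|I| by rewrite -cardR subset_leq_card ?ends_sub.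
have := leq_alpha indJ; rewrite cardsDS ?ends_sub // cardR cardsD.
have := subset_leq_card (subsetIl EI M); lia.
Qed.

End Dissociation.

(* Every edge of [M] outside G[I] has an endpoint outside [I], and these
   endpoints are distinct since [M] is a matching. *)
Lemma card_matching_le (T : finType) (e : rel T) (M : {set {set T}}) (I : {set T}) :
  matching e M -> #|M| + #|I| <= #|induced_edges e I :&: M| + #|T|.
Proof.
case/andP=> /forallP edgesM /forallP disjM.
set EI := induced_edges e I.
suff : #|M :\: EI| <= #|~: I|.
  rewrite cardsD setIC; have := subset_leq_card (subsetIl M EI).
  have := cardsC I; lia.
have outside f : f \in M :\: EI -> f :\: I != set0.
  rewrite !inE => /andP[fE fM]; move: fE; rewrite (implyP (edgesM f) fM) /=.
  by apply: contraNN; rewrite setD_eq0.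
have [-> | /set0Pn[f0 /outside/set0Pn[z0 _]]] := eqVneq (M :\: EI) set0; first by rewrite cards0.
pose out f := odflt z0 [pick z in f :\: I].
have outP f : f \in M :\: EI -> out f \in f :\: I.
  move/outside; rewrite /out; case: pickP => [z // | none].
  by apply: contraNT => _; apply/eqP/setP => z; rewrite in_set0; exact: none.
have out_inj : {in M :\: EI &, injective out}.
  move=> f g fM gM Efg; apply/eqP; apply: contraTT isT => fg.
  have := implyP (forallP (implyP (disjM f) (setDP fM).1) g) (setDP gM).1.
  rewrite fg -setI_eq0 => /eqP/setP/(_ (out f)).
  by move: (outP _ fM) (outP _ gM); rewrite Efg !inE => /andP[_ ->] /andP[_ ->].
rewrite -(card_in_imset out_inj); apply/subset_leq_card/subsetP => _ /imsetP[f fM ->].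
by move: (outP _ fM); rewrite !inE => /andP[].
Qed.

Lemma exists_maximum_dissociation (T : finType) (e : rel T) :
  exists I, maximum_dissociation e I.
Proof.
have d0 : dissociation e set0 by apply/forallP => x; rewrite inE.
have [I dI Imax] := @arg_maxnP _ set0 (dissociation e) (fun I => #|I|) d0.
exists I; rewrite /maximum_dissociation dI eqn_leq (leq_bigmax_cond (P := dissociation e)) //.
by apply/bigmax_leqP => J /Imax.
Qed.

Unset Implicit Arguments. Set Strict Implicit. Set Printing Implicit Defensive.

Theorem mainTheorem3 (T : finType) (e : rel T) (M : {set {set T}}) :
  simple_graph e -> bipartite e ->
  maximum_matching e M ->
  3 * diss e = 4 * alpha (remove_edges e M) ->
  [/\ alpha (remove_edges e M) = alpha e,
      matching_number e = matching_number (remove_edges e M) &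
      forall I : {set T}, maximum_dissociation e I ->
        [/\ forall x, x \in I -> ideg e I x = 1,
            2 * #|induced_edges e I :&: M| = #|induced_edges e I| &
            4 * #|induced_edges e I :&: M| = diss e]].
Proof.
move=> [se _] bip /andP[Mm /eqP nuE] heq; have [c hc] := bip.
have bounds I : maximum_dissociation e I ->
    [/\ 2 * #|induced_edges e I| <= #|I|,
        #|I| + #|induced_edges e I :&: M| <= alpha (remove_edges e M) + #|induced_edges e I|,
        #|M| + #|I| <= #|induced_edges e I :&: M| + #|T| & #|I| = diss e].
  case/andP=> dI /eqP dE; split=> //.
  - exact: (card_induced_edges_le se hc dI).
  - exact: (card_le_alpha_remove_edges se hc dI M).
  - exact: card_matching_le.
set H := remove_edges e M in heq bounds *.
have subH : subrel H e by move=> x y /andP[].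
have seH : symmetric H by move=> x y; rewrite /H /remove_edges se setUC.
have bipH : bipartite H by exists c => x y /subH /hc.
have konigE := card_le_alpha_add_matching_number se bip.
have konigH := card_le_alpha_add_matching_number seH bipH.
have alphaH := alpha_subrel subH.
have nuH := matching_number_subrel subH.
have [I0 /bounds[]] := exists_maximum_dissociation e.
split; [lia | lia | move=> I maxI].
have [le2 leH leM dE] := bounds I maxI.
have regular := induced_regular se hc (proj1 (andP maxI)).
split; [apply: regular; lia | lia | lia].
Qed.
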